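(* For the tree $\widetilde T$ constructed below there is a constant $C>0$ such that $|\widetilde T_n|\le 3^{C\sqrt n}$ for all $n\ge1$.
   Context: For a rooted tree, $T_n$ denotes the set of edges $e=(e^-,e^+)$ with $e^+$ at distance $n$ from the root. To a nonempty set $E\subset\{0,1,2\}^{\mathbb N}$ associate the rooted tree $\Phi(E)$ whose vertices are all finite words (including the empty word, the root) that are prefixes of some element of $E$, with edges between each such word $w$ and each such word $wj$, $j\in\{0,1,2\}$. The shift is $\mathcal S(a_1,a_2,\dots)=(a_2,a_3,\dots)$. The labelled $1$-$3$ tree $T_{1,3}$: vertices are finite words over $\{0,1,2\}$; the root $\emptyset$ has children $0,1$; a vertex $w$ with $k$ children has children $w0,\dots,w(k-1)$; for each $n\ge1$, ordering the $2^n$ level-$n$ vertices lexicographically, the first $2^{n-1}$ have one child and the last $2^{n-1}$ have three children. Let $R$ be the set of sequences all of whose prefixes are vertices of $T_{1,3}$, $E_0$ the set of sequences $(a_1,a_2,0,a_3,0,0,a_4,0,0,0,a_5,\dots)$ (each $a_k$ followed by $k-1$ zeros) for $(a_k)\in R$, $E_j=\mathcal S(E_{j-1})$, $\widetilde E=\bigcup_{j\ge0}E_j$, and $\widetilde T=\Phi(\widetilde E)$. *)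

From mathcomp Require Import all_boot.
From mathcomp Require Import boolp.
Set Implicit Arguments. Unset Strict Implicit. Unset Printing Implicit Defensive.

Fixpoint lexle (s t : seq nat) : bool :=
  match s, t with
  | [::], _ => true
  | _ :: _, [::] => false
  | a :: s', b :: t' => (a < b) || ((a == b) && lexle s' t')
  end.

(* level n of the labelled 1-3 tree T_{1,3}: the list of its level-n
   vertices (words of length n), sorted lexicographically. The word "w j"
   is [rcons w j]. *)
Fixpoint level13 (n : nat) : seq (seq nat) :=
  match n with
  | 0 => [:: [::]]
  | n'.+1 =>
    sort lexle
      (match n' with
       | 0 => [:: [:: 0]; [:: 1]]
       | _ =>
         let L := level13 n' in
         flatten [seq (let w := nth [::] L i in
                       if i < 2 ^ n'.-1 then [:: rcons w 0]
                       else [:: rcons w 0; rcons w 1; rcons w 2])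
                 | i <- iota 0 (size L)]
       end)
  end.

Definition vertex13 (w : seq nat) : bool := w \in level13 (size w).

Definition sequence3 := nat -> 'I_3.

Definition prefix (x : sequence3) (n : nat) : seq nat := mkseq (fun i => nat_of_ord (x i)) n.

Definition inR (a : sequence3) : Prop := forall n, vertex13 (prefix a n).

(* triangular numbers: 0-indexed position of a_{k+1} in the E_0 sequence *)
Definition tri (k : nat) : nat := (k * k.+1) %/ 2.

(* E_0 : (a_1, a_2, 0, a_3, 0, 0, a_4, ...) with each a_k followed by k-1 zeros *)
Definition E0 (x : sequence3) : Prop :=
  exists a : sequence3, inR a /\
    (forall k, x (tri k) = a k) /\
    (forall i, (forall k, i <> tri k) -> x i = ord0).

Definition shift (x : sequence3) : sequence3 := fun i => x i.+1.

Definition Ej (j : nat) (x : sequence3) : Prop :=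
  exists y, E0 y /\ x = iter j shift y.

Definition Etilde (x : sequence3) : Prop := exists j, Ej j x.

Definition PhiVertex (E : sequence3 -> Prop) (w : seq 'I_3) : Prop :=
  exists x, E x /\ forall i, i < size w -> x i = nth ord0 w i.

Definition PhiEdges (E : sequence3 -> Prop) (n : nat)
  : {set (n.-1).-tuple 'I_3 * n.-tuple 'I_3} :=
  [set e : (n.-1).-tuple 'I_3 * n.-tuple 'I_3 | `[< PhiVertex E (val e.1) /\ PhiVertex E (val e.2) /\
             exists j : 'I_3, val e.2 = rcons (val e.1) j >] ].

(* An element of E~ is a shift S^j y of a sequence y of E_0, and y is zero
   except at the triangular positions tri k, where it carries a_k.  Hence a
   level-n vertex of T~, i.e. a window y_j ... y_{j+n-1}, is determined by
   - the offset p of the first triangular position tri k0 >= j in the window,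
   - the index k0 (both capped at n: beyond n the window sees at most one
     marked position, and only the cap matters),
   - the labels a_{k0}, a_{k0+1}, ... of the marked positions in the window;
     consecutive triangular numbers drift apart, so a window of length n
     contains fewer than M := sqrt(2n) + 1 of them.
   This gives at most (n+1)^2 3^M <= 3^(5M) level-n vertices, and as an edge
   of T_n is determined by its lower endpoint, |T~_n| <= 3^(5M) <= 3^(15 sqrt n). *)

From mathcomp Require Import all_boot boolp.
From Stdlib Require Import Reals Lia Lra.
From mathcomp Require Import zify.
(* Reals rebinds [^] on nat to [Nat.pow]; restore ssrnat's [expn]. *)
Import ssrnat.

Set Implicit Arguments.
Unset Strict Implicit.
Unset Printing Implicit Defensive.

Lemma tri_double k : 2 * tri k = k * k.+1.
Proof.
rewrite /tri; have /dvdnP [q ->] : 2 %| k * k.+1.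
  by rewrite dvdn2 oddM /= andbN.
by rewrite mulnK // mulnC.
Qed.

Definition gap (k t : nat) : nat := k * t + tri t.

Lemma tri_addE k t : tri (k + t) = tri k + gap k t.
Proof.
rewrite /gap; have := tri_double k; have := tri_double t; have := tri_double (k + t).
nia.
Qed.

Lemma tri_ge k : k <= tri k.
Proof. have := tri_double k; nia. Qed.

Lemma gap_ge k t : k * t + t <= gap k t.
Proof. rewrite /gap; have := tri_double t; nia. Qed.

Definition max_marks (n : nat) : nat := (Nat.sqrt (2 * n)).+1.

Lemma tri_lt_max_marks n t : tri t < n -> t < max_marks n.
Proof.
rewrite /max_marks; have [_ hsq] := Nat.sqrt_spec' (2 * n).
have := tri_double t; nia.
Qed.

Lemma max_marks_sq n : n.+1 <= max_marks n * max_marks n.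
Proof. rewrite /max_marks; have [_ hsq] := Nat.sqrt_spec' (2 * n); lia. Qed.

Section Window.
Variables j k0 : nat.
Hypothesis k0_ge : j <= tri k0.
Hypothesis k0_min : forall K, j <= tri K -> k0 <= K.

Lemma window_tri i K :
  i + j = tri K -> exists t, K = k0 + t /\ i = tri k0 - j + gap k0 t.
Proof.
move=> hK; have hk0K : k0 <= K by apply: k0_min; lia.
exists (K - k0); have eK : K = k0 + (K - k0) by lia.
split=> //; move: hK; rewrite {1}eK tri_addE; lia.
Qed.

End Window.

Lemma gap_cap n p k t i :
  i < n -> (i == p + gap k t) = (i == minn p n + gap (minn k n) t).
Proof.
move=> hi; have := gap_ge k t; have := gap_ge (minn k n) t.
case: (leqP k n) => hk; case: (posnP t) => [-> | ht]; rewrite /gap /tri /=; nia.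
Qed.

(* The window code: offset p, index k, and the labels v of the marked
   positions p + gap k t (t < max_marks n); all other letters are 0. *)
Notation window_data n :=
  ('I_n.+1 * 'I_n.+1 * {ffun 'I_(max_marks n) -> 'I_3})%type.

Definition window_code {n : nat} (d : window_data n) : n.-tuple 'I_3 :=
  let: (p, k, v) := d in
  [tuple if [pick t : 'I_(max_marks n) | (i : nat) == p + gap k t] is Some t
         then v t else ord0 | i < n].

Lemma iter_shift j (y : sequence3) i : iter j shift y i = y (i + j).
Proof. by elim: j i => [|j IH] i; rewrite ?addn0 //= /shift IH addSnnS. Qed.

Lemma vertex_window_code n (w : n.-tuple 'I_3) :
  PhiVertex Etilde w -> exists d, w = window_code d.
Proof.
move=> [x [[j [y [[a [_ [y_tri y_zero]]] ->]]] xw]].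
have wE (i : 'I_n) : tnth w i = y (i + j).
  by rewrite (tnth_nth ord0) -xw ?size_tuple // iter_shift.
have [k0 k0_ge k0_min] : exists2 k0, j <= tri k0 & forall K, j <= tri K -> k0 <= K.
  by case: (ex_minnP (ex_intro (fun k => j <= tri k) j (tri_ge j))) => k0 ? ?; exists k0.
set p := tri k0 - j.
exists (inord (minn p n), inord (minn k0 n), [ffun t : 'I_(max_marks n) => a (k0 + t)]).
apply: eq_from_tnth => i; rewrite wE tnth_mktuple !inordK; try lia.
rewrite -(eq_pick (fun t : 'I_(max_marks n) => gap_cap p k0 t (ltn_ord i))).
case: pickP => [t /eqP it | no_mark].
  by rewrite ffunE -y_tri it /p tri_addE; congr y; lia.
have [[K iK] | not_tri] := pselect (exists K, i + j = tri K); last first.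
  by apply: y_zero => k ik; apply: not_tri; exists k.
have [t [_ it]] := window_tri k0_ge k0_min iK.
have t_small : t < max_marks n.
  by apply: tri_lt_max_marks; have := ltn_ord i; rewrite /gap in it; lia.
by have := no_mark (Ordinal t_small); rewrite /= it eqxx.
Qed.

(* An edge of T_n is determined by its lower endpoint, a vertex at level n. *)
Lemma card_edges_le_vertices (E : sequence3 -> Prop) n :
  #|PhiEdges E n| <= #|[set w : n.-tuple 'I_3 | `[< PhiVertex E w >]]|.
Proof.
have snd_inj : {in PhiEdges E n &, injective (@snd _ _)}.
  move=> [u v] [u' v']; rewrite !inE => /asboolP [_ [_ [c vE]]].
  move=> /asboolP [_ [_ [c' v'E]]] /= vv'.
  have /rcons_inj [uu' _] : rcons u c = rcons u' c' by rewrite -vE -v'E vv'.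
  by rewrite vv' (val_inj uu').
rewrite -(card_in_imset snd_inj); apply: subset_leq_card.
apply/subsetP => _ /imsetP [e + ->]; rewrite !inE => /asboolP [_ [vx _]].
exact/asboolP.
Qed.

Lemma card_vertices_le n :
  #|[set w : n.-tuple 'I_3 | `[< PhiVertex Etilde w >]]| <= #|{: window_data n}|.
Proof.
apply: leq_trans (leq_imset_card (@window_code n) predT).
apply: subset_leq_card; apply/subsetP => w; rewrite inE => /asboolP /vertex_window_code [d ->].
exact: imset_f.
Qed.

(* (n+1)^2 3^M <= 3^(5M), since n + 1 <= M^2 < 3^(2M). *)
Lemma card_window_data n : #|{: window_data n}| <= 3 ^ (5 * max_marks n).
Proof.
rewrite !card_prod card_ffun !card_ord.
set X := 3 ^ max_marks n.
have marks_lt : max_marks n < X by apply: ltn_expl.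
have n_lt : n.+1 <= X * X.
  by apply: leq_trans (max_marks_sq n) _; apply: leq_mul; apply: ltnW.
rewrite (mulnC 5) expnM -/X !expnS expn0 muln1.
have := leq_mul n_lt n_lt; nia.
Qed.

Lemma card_edges_le n : #|PhiEdges Etilde n| <= 3 ^ (5 * max_marks n).
Proof.
apply: leq_trans (card_edges_le_vertices _ _) _.
exact: leq_trans (card_vertices_le n) (card_window_data n).
Qed.

Lemma INR_expn a m : INR (a ^ m) = (INR a ^ m)%R.
Proof. by elim: m => [|m IH] //; rewrite expnS -multE mult_INR IH. Qed.

Lemma max_marks_le_sqrt n : 1 <= n -> (INR (max_marks n) <= 3 * sqrt (INR n))%R.
Proof.
move=> n_ge1; rewrite /max_marks S_INR; set s := Nat.sqrt (2 * n).
have s_sq : (INR s * INR s <= 2 * INR n)%R.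
  have [s_sq _] := Nat.sqrt_spec' (2 * n).
  rewrite -mult_INR (_ : 2%R = INR 2) // -mult_INR; apply: le_INR; lia.
have s_le : (INR s <= sqrt 2 * sqrt (INR n))%R.
  rewrite -sqrt_mult; [|lra|apply: pos_INR].
  by rewrite -(sqrt_square (INR s)); [apply: sqrt_le_1_alt | apply: pos_INR].
have sqrt2_le : (sqrt 2 <= 2)%R.
  by rewrite -{2}(sqrt_square 2); [apply: sqrt_le_1_alt | ]; lra.
have sqrtn_ge1 : (1 <= sqrt (INR n))%R.
  by rewrite -sqrt_1; apply: sqrt_le_1_alt; apply: (le_INR 1); lia.
have := sqrt_pos (INR n); nra.
Qed.

Theorem mainTheorem3 :
  exists C : R, (0 < C)%R /\
    forall n : nat, (1 <= n)%N ->
      (INR #|PhiEdges Etilde n| <= Rpower 3 (C * sqrt (INR n)))%R.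
Proof.
exists 15%R; split; first lra.
move=> n n_ge1.
apply: Rle_trans (_ : INR (3 ^ (5 * max_marks n)) <= _)%R.
  by apply: le_INR; apply/leP; apply: card_edges_le.
rewrite INR_expn -Rpower_pow (_ : INR 3 = 3%R); try by simpl; lra.
apply: Rle_Rpower; first lra.
rewrite -multE mult_INR (_ : INR 5 = 5%R); last by simpl; lra.
have := max_marks_le_sqrt n_ge1; lra.
Qed.
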